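(* (a) Let $n\ge 3$ be odd. The set $A=\{(0,0),(0,1),\dots,(0,n-2),(1,1),(1,2),\dots,(1,n-1)\}\subseteq\mathbb{Z}_n^2$ has $|A|=2n-2$ and contains no subset $S$ with $|S|=n$ and $\sum_{s\in S}s=(0,0)$; hence $g(\mathbb{Z}_n^2)\ge 2n-1$. (b) Let $n\ge 2$ be even. The set $B=\{0,1\}\times\mathbb{Z}_n\subseteq\mathbb{Z}_n^2$ has $|B|=2n$ and contains no subset $S$ with $|S|=n$ and $\sum_{s\in S}s=(0,0)$; hence $g(\mathbb{Z}_n^2)\ge 2n+1$.
   Context: For a finite abelian group $G$, $g(G)$ is the smallest positive integer $t$ such that every subset $X\subseteq G$ with $|X|\ge t$ contains a subset $S$ with $|S|=\exp(G)$ and $\sum_{s\in S}s=0_G$. Here $\exp(\mathbb{Z}_n^2)=n$. *)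

From HB Require Import structures.
From mathcomp Require Import all_boot all_order all_algebra.
Set Implicit Arguments. Unset Strict Implicit. Unset Printing Implicit Defensive.
Import GRing.Theory.
Local Open Scope ring_scope.

Notation Zn2 n := ('Z_n * 'Z_n)%type.

Definition has_zs_subset (n : nat) (X : {set Zn2 n}) : bool :=
  [exists S : {set Zn2 n}, [&& S \subset X, #|S| == n & \sum_(s in S) s == 0]].

(* t has the defining property of g(Z_n^2), with exp(Z_n^2) = n. *)
Definition g_prop (n t : nat) : bool :=
  (0 < t)%N && [forall X : {set Zn2 n}, (t <= #|X|)%N ==> has_zs_subset X].

Lemma g_prop_ex (n : nat) : exists t, g_prop n t.
Proof.
exists #|[set: Zn2 n]|.+1; rewrite /g_prop /=; apply/forallP => X.
by rewrite ltnNge subset_leq_card // subsetT.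
Qed.

Definition g_Zn2 (n : nat) : nat := ex_minn (g_prop_ex n).

Definition setA (n : nat) : {set Zn2 n} :=
  [set ((0 : 'Z_n), (j%:R : 'Z_n)) | j : 'I_(n.-1)]
  :|: [set ((1 : 'Z_n), ((j.+1)%:R : 'Z_n)) | j : 'I_(n.-1)].

Definition setB (n : nat) : {set Zn2 n} :=
  [set x : Zn2 n | (x.1 == 0) || (x.1 == 1)].

From mathcomp Require Import all_boot all_order all_algebra.
From mathcomp Require Import zify.
Set Implicit Arguments. Unset Strict Implicit. Unset Printing Implicit Defensive.
Import GRing.Theory.

(* Any set X without a zero-sum n-subset forces g(Z_n^2) > |X|, so both
   bounds reduce to exhibiting such a set. Both sets live in the two rows
   R_0 = {0} x Z_n and R_1 = {1} x Z_n, i.e. in B = R_0 u R_1. The first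
   coordinate of the sum of S, a subset of B, is |S n R_1| mod n, so a
   zero-sum S has n | |S n R_1|.
   (a) A meets each row in n-1 points; hence an n-subset S of A has
       0 < |S n R_1| < n, which no multiple of n satisfies. This part holds
       for every n >= 2.
   (b) If |S| = n and n | |S n R_1|, then S is a whole row, whose second
       coordinates sum to 0 + 1 + ... + (n-1) = n(n-1)/2, which is nonzero
       mod n when n is even. *)

Lemma g_Zn2_gt n (X : {set Zn2 n}) : ~~ has_zs_subset X -> (#|X| < g_Zn2 n)%N.
Proof.
rewrite /g_Zn2; case: ex_minnP => g /andP[_ /forallP gX] _ zsfX.
rewrite ltnNge; apply: contra zsfX => leg.
by have := gX X; rewrite leg.
Qed.

Lemma even_ndvd_bin2 n : ~~ odd n -> (0 < n)%N -> ~~ (n %| 'C(n, 2))%N.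
Proof.
move=> even_n n_gt0; have n_def : n = (n./2 * 2)%N.
  by rewrite -[LHS]odd_double_half (negbTE even_n) add0n -muln2.
move: n_gt0; rewrite n_def; set q := n./2 => q2_gt0.
have q_gt0 : (0 < q)%N by lia.
rewrite bin2 mulnAC -divn2 mulnK // dvdn_pmul2l // dvdn2.
by rewrite negbK -subn1 oddB ?odd_mul ?andbF //; lia.
Qed.

(* Throughout, n = m + 2, so that 'Z_n is the ring Z/nZ itself. *)
Section TwoRows.
Local Open Scope ring_scope.
Variable m : nat.
Local Notation n := m.+2.

Definition row (c : 'Z_n) : {set Zn2 n} := [set s | s.1 == c].

Lemma natZp_inj i j : (i < n)%N -> (j < n)%N -> (i%:R : 'Z_n) = j%:R -> i = j.
Proof.
move=> lt_i lt_j /(congr1 val); rewrite !Zp_nat /=.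
by change (Zp_trunc n).+2 with n; rewrite !modn_small.
Qed.

Lemma card_row c : #|row c| = n.
Proof.
have -> : row c = setX [set c] setT by apply/setP => s; rewrite !inE andbT.
by rewrite cardsX cards1 cardsT card_ord mul1n.
Qed.

Lemma rows_disjoint c d : c != d -> [disjoint row c & row d].
Proof.
move=> ncd; rewrite -setI_eq0; apply/eqP/setP => s; rewrite !inE.
by apply/negbTE/nandP; case: (eqVneq s.1 c) => [->|]; [right|left].
Qed.

Lemma row0_row1_disjoint : [disjoint row 0 & row 1].
Proof. by apply: rows_disjoint; rewrite eq_sym oner_neq0. Qed.

Lemma setB_rows : setB n = row 0 :|: row 1.
Proof. by apply/setP => s; rewrite !inE. Qed.

Lemma card_setB : #|setB n| = (2 * n)%N.
Proof.
rewrite setB_rows cardsU (disjoint_setI0 row0_row1_disjoint) cards0 subn0.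
by rewrite !card_row addnn mul2n.
Qed.

Lemma sum_fst_setB (S : {set Zn2 n}) : S \subset setB n ->
  (\sum_(s in S) s).1 = #|S :&: row 1%R|%:R.
Proof.
move=> sSB; rewrite raddf_sum /= (bigID (fun s => s.1 == 1)) /=.
rewrite [X in _ + X]big1 ?addr0; last first.
  move=> s /andP[Ss /negbTE s1]; apply/eqP.
  by move: (subsetP sSB s Ss); rewrite inE s1 orbF.
rewrite -sum1_card natr_sum; apply: eq_big => [s|s /andP[_ /eqP //]].
by rewrite !inE.
Qed.

Lemma zero_sum_setB_dvd (S : {set Zn2 n}) :
  S \subset setB n -> \sum_(s in S) s = 0 -> (n %| #|S :&: row 1%R|)%N.
Proof.
move=> sSB /(congr1 fst); rewrite sum_fst_setB //= => /(congr1 val).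
by rewrite Zp_nat /= => /eqP.
Qed.

Lemma setB_dvd_row (S : {set Zn2 n}) : S \subset setB n -> #|S| = n ->
  (n %| #|S :&: row 1%R|)%N -> exists c, S = row c.
Proof.
move=> sSB cardS /dvdnP[q q_def].
have : (#|S :&: row 1%R| <= n)%N.
  by rewrite -[X in (_ <= X)%N](card_row 1) subset_leq_card ?subsetIr.
rewrite q_def; case: q q_def => [|[|q]] q_def; last by lia.
- move=> _; exists 0; apply/eqP; rewrite eqEcard card_row cardS leqnn andbT.
  apply/subsetP => s Ss; move: (subsetP sSB s Ss); rewrite !inE => /orP[] // s1.
  have : s \in S :&: row 1 by rewrite !inE Ss.
  by move/cards0_eq: q_def => ->; rewrite inE.
- move=> _; exists 1; apply/eqP; rewrite eq_sym eqEcard card_row cardS leqnn andbT.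
  have /eqP <- : S :&: row 1 == row 1.
    by rewrite eqEcard subsetIr card_row q_def mul1n leqnn.
  exact: subsetIl.
Qed.

Lemma sum_row_snd c : \sum_(s in row c) s.2 = \sum_(x : 'Z_n) x.
Proof.
have -> : row c = pair c @: setT.
  apply/setP => s; rewrite inE; apply/eqP/imsetP => [<-|[x _ ->]] //.
  by exists s.2; rewrite ?inE //; case: s.
rewrite big_imset /=; last by move=> x y _ _ [].
by apply: eq_bigl => x; rewrite inE.
Qed.

(* 0 + 1 + ... + (n-1) vanishes in Z_n only if n divides 'C(n, 2). *)
Lemma sum_Zn_neq0 : ~~ odd n -> \sum_(x : 'Z_n) x != 0.
Proof.
move=> even_n.
have -> : \sum_(x : 'Z_n) x = 'C(n, 2)%:R.
  by rewrite -bin2_sum big_mkord natr_sum; apply: eq_bigr => x _; rewrite natr_Zp.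
apply/eqP => /(congr1 val); rewrite Zp_nat /=; change (Zp_trunc n).+2 with n.
by move/eqP; apply/negP; apply: even_ndvd_bin2.
Qed.

(* Part (b): for even n, the two rows {0,1} x Z_n contain no zero-sum
   n-subset, since such a subset would be a whole row. *)
Lemma setB_zero_sum_free : ~~ odd n -> ~~ has_zs_subset (setB n).
Proof.
move=> even_n; apply/existsP => -[S /and3P[sSB /eqP cardS /eqP sum0]].
have [c S_def] := setB_dvd_row sSB cardS (zero_sum_setB_dvd sSB sum0).
move/(congr1 snd): sum0; rewrite raddf_sum /= S_def sum_row_snd.
by apply/eqP; apply: sum_Zn_neq0.
Qed.

Definition setA0 : {set Zn2 n} := [set (0, j%:R) | j : 'I_n.-1].
Definition setA1 : {set Zn2 n} := [set (1, j.+1%:R) | j : 'I_n.-1].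

Lemma setAE : setA n = setA0 :|: setA1.
Proof. by []. Qed.

Lemma card_setA0 : #|setA0| = n.-1.
Proof.
rewrite card_imset ?card_ord // => i j /= [] /natZp_inj ij.
by apply: val_inj; apply: ij; apply: leqW.
Qed.

Lemma card_setA1 : #|setA1| = n.-1.
Proof.
rewrite card_imset ?card_ord // => i j /= [] /natZp_inj ij.
by apply: val_inj; apply: succn_inj; apply: ij; rewrite ltnS.
Qed.

Lemma setA0_row0 : setA0 \subset row 0.
Proof. by apply/subsetP => _ /imsetP[j _ ->]; rewrite inE. Qed.

Lemma setA1_row1 : setA1 \subset row 1.
Proof. by apply/subsetP => _ /imsetP[j _ ->]; rewrite inE. Qed.

Lemma setA_sub_setB : setA n \subset setB n.
Proof. by rewrite setAE setB_rows setUSS ?setA0_row0 ?setA1_row1. Qed.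

Lemma setA01_disjoint : [disjoint setA0 & setA1].
Proof. exact: disjointW setA0_row0 setA1_row1 row0_row1_disjoint. Qed.

Lemma card_setA : #|setA n| = (2 * n - 2)%N.
Proof.
rewrite setAE cardsU (disjoint_setI0 setA01_disjoint) cards0 subn0.
by rewrite card_setA0 card_setA1; lia.
Qed.

Lemma setA_row1 : setA n :&: row 1 = setA1.
Proof.
rewrite setAE setIUl (setIidPl setA1_row1).
rewrite (disjoint_setI0 (disjointWl setA0_row0 row0_row1_disjoint)).
exact: set0U.
Qed.

Lemma setA_not_row1 : setA n :\: row 1 = setA0.
Proof.
rewrite setAE setDUl (setDidPl (disjointWl setA0_row0 row0_row1_disjoint)).
by move: setA1_row1; rewrite -setD_eq0 => /eqP ->; rewrite setU0.
Qed.

(* Part (a), valid for every n >= 2: an n-subset of A has between 1 and n-1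
   points in row 1, so its row-1 count is not divisible by n. *)
Lemma setA_zero_sum_free : ~~ has_zs_subset (setA n).
Proof.
apply/existsP => -[S /and3P[sSA /eqP cardS /eqP sum0]].
have sSB : S \subset setB n := subset_trans sSA setA_sub_setB.
have row1_le : (#|S :&: row 1%R| <= n.-1)%N.
  by rewrite -card_setA1 -setA_row1 subset_leq_card ?setSI.
have row0_le : (#|S :\: row 1%R| <= n.-1)%N.
  by rewrite -card_setA0 -setA_not_row1 subset_leq_card ?setSD.
have := cardsID (row 1) S; rewrite cardS.
by case/dvdnP: (zero_sum_setB_dvd sSB sum0) row1_le => -[|q] ->; lia.
Qed.

End TwoRows.

Theorem mainTheorem4 :
  (forall n : nat, (3 <= n)%N -> odd n ->
     [/\ #|setA n| = (2 * n - 2)%N, ~~ has_zs_subset (setA n)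
       & (2 * n - 1 <= g_Zn2 n)%N]) /\
  (forall n : nat, (2 <= n)%N -> ~~ odd n ->
     [/\ #|setB n| = (2 * n)%N, ~~ has_zs_subset (setB n)
       & (2 * n + 1 <= g_Zn2 n)%N]).
Proof.
split=> -[|[|m]] // _ parity.
- have zsfA := setA_zero_sum_free m.
  split; rewrite ?card_setA //.
  by have := g_Zn2_gt zsfA; rewrite card_setA; lia.
- have zsfB := setB_zero_sum_free parity.
  split; rewrite ?card_setB //.
  by have := g_Zn2_gt zsfB; rewrite card_setB; lia.
Qed.
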